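(* Let $G$ be an outer-string graph with an outer-string representation $\varphi$, and let $\varphi(x_i)$ be an external string. Suppose a cop occupies $x_i$ and the robber occupies a vertex whose string does not intersect $\varphi(x_i)$ and lies to the right of $\varphi(x_i)$. If the cop stays on $x_i$, the robber cannot move to a string on the left of $\varphi(x_i)$ (without being captured).
   Context: An outer-string representation of $G$ assigns to each vertex a bounded curve (string) in the closed upper half-plane meeting the $x$-axis in exactly one point, an endpoint of the string, with distinct vertices adjacent iff their strings intersect. Order the vertices $v_1,\dots,v_n$ by the $x$-coordinate of the point where their string meets the $x$-axis; $v_i$ is on the left of $v_j$ (and $v_j$ on the right of $v_i$) if $i<j$. The strings partition the upper half-plane into regions, exactly one unbounded; a string is external if it has a point on the boundary of the unbounded region. Game of cops and robber: alternate moves, each piece stays or moves to an adjacent vertex; capture when a cop occupies the robber's vertex (a robber moving to a vertex of $N[x_i]$ while a cop is on $x_i$ is captured). *)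

From HB Require Import structures.
From mathcomp Require Import all_boot all_order all_algebra.
From mathcomp Require Import all_classical all_reals all_analysis.
Set Implicit Arguments. Unset Strict Implicit. Unset Printing Implicit Defensive.
Import Order.TTheory GRing.Theory Num.Theory.
Import numFieldNormedType.Exports.
Local Open Scope classical_set_scope.
Local Open Scope ring_scope.

Section OuterString.
Variable R : realType.
Local Notation pt := (R * R)%type.

Definition upper_half : set pt := [set p | 0 <= p.2].

Definition string_of (gam : R -> pt) : set pt := gam @` [set t : R | 0 <= t <= 1].

(* gam is a string: a curve (continuous on [0,1]) in the closed upper
   half-plane meeting the x-axis in exactly one point, its endpoint gam 0.
   (Boundedness is automatic: continuous image of [0,1].) *)
Definition is_string (gam : R -> pt) : Prop :=
  {within [set t : R | 0 <= t <= 1], continuous gam} /\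
  (gam 0).2 = 0 /\
  (forall t, 0 <= t <= 1 -> 0 <= (gam t).2 /\ ((gam t).2 = 0 -> gam t = gam 0)).

Definition base (V : Type) (phi : V -> R -> pt) (v : V) : pt := phi v 0.

Definition outer_string_rep (V : finType) (e : rel V) (phi : V -> R -> pt) : Prop :=
  (forall v, is_string (phi v)) /\
  (forall u v, u != v -> (e u v <-> string_of (phi u) `&` string_of (phi v) !=set0)).

Definition all_strings (V : finType) (phi : V -> R -> pt) : set pt :=
  \bigcup_(v in [set: V]) string_of (phi v).

Definition region (V : finType) (phi : V -> R -> pt) (C : set pt) : Prop :=
  exists p, (upper_half `\` all_strings phi) p /\
            C = connected_component (upper_half `\` all_strings phi) p.

Definition bounded_pts (A : set pt) : Prop :=
  exists M : R, forall p, A p -> `|p.1| <= M /\ `|p.2| <= M.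

Definition bdry (A : set pt) : set pt := closure A `\` interior A.

Definition external (V : finType) (phi : V -> R -> pt) (x : V) : Prop :=
  exists C, region phi C /\ ~ bounded_pts C /\
            string_of (phi x) `&` bdry C !=set0.

End OuterString.

(* Suppose u is left of x, r is right of x, u meets r and x meets neither.  Going
   along u from its base to a crossing point with r, back along r to its base, and
   then along the mirror image of this path below the x-axis gives a closed curve L.
   The string x is connected and lies in the upper half-plane off L, so L winds
   around each point of x as around the base of x, which lies on the axis between
   the bases of u and r: there the winding number is -1.  A region of the upper
   half-plane missing u and r is also off L, so if x met its closure, the winding
   number would be -1 on the whole region; but an unbounded region reaches beyond a
   box containing L, where the winding number is 0.  Winding numbers are computed by
   counting quarter turns along fine polygonal samplings of L. *)

From HB Require Import structures.
From mathcomp Require Import all_boot all_order all_algebra.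
From mathcomp Require Import all_classical all_reals all_analysis.
From mathcomp Require Import ring lra zify.
Import Order.TTheory GRing.Theory Num.Theory.
Import numFieldNormedType.Exports.
Set Implicit Arguments. Unset Strict Implicit. Unset Printing Implicit Defensive.
Local Open Scope classical_set_scope.
Local Open Scope ring_scope.

Definition quarter_turn (a b : nat) : int :=
  let k := ((4 + b - a) %% 4)%N in
  if k == 1%N then 1 else if k == 3%N then -1 else 0.

Definition opposite_quadrants (a b : nat) : bool := ((4 + b - a) %% 4)%N == 2%N.

Definition angle_off1 (a : nat) : int :=
  if a == 0%N then 0 else if a == 3%N then -1 else -2.

Lemma quarter_turnC a b : (a < 4)%N -> (b < 4)%N -> quarter_turn b a = - quarter_turn a b.
Proof. by case: a => [|[|[|[|a]]]] //; case: b => [|[|[|[|b]]]]. Qed.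

Lemma quarter_turn_cycle4 a b c d :
  (a < 4)%N -> (b < 4)%N -> (c < 4)%N -> (d < 4)%N ->
  ~~ opposite_quadrants a b -> ~~ opposite_quadrants b c ->
  ~~ opposite_quadrants c d -> ~~ opposite_quadrants d a ->
  ~~ opposite_quadrants a c -> ~~ opposite_quadrants b d ->
  quarter_turn a b + quarter_turn b c + quarter_turn c d + quarter_turn d a = 0.
Proof.
by case: a => [|[|[|[|a]]]] //; case: b => [|[|[|[|b]]]] //;
   case: c => [|[|[|[|c]]]] //; case: d => [|[|[|[|d]]]].
Qed.

Lemma quarter_turn_off3 a b : (a < 4)%N -> (b < 4)%N -> a != 3%N -> b != 3%N ->
  ~~ opposite_quadrants a b -> quarter_turn a b = b%:Z - a%:Z.
Proof. by case: a => [|[|[|[|a]]]] //; case: b => [|[|[|[|b]]]]. Qed.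

Lemma quarter_turn_off1 a b : (a < 4)%N -> (b < 4)%N -> a != 1%N -> b != 1%N ->
  ~~ opposite_quadrants a b -> quarter_turn a b = angle_off1 b - angle_off1 a.
Proof. by case: a => [|[|[|[|a]]]] //; case: b => [|[|[|[|b]]]]. Qed.

Section Quadrant.
Variable R : realFieldType.
Implicit Types v w : R * R.

Definition quadrant v : nat :=
  if (0 < v.1) && (0 <= v.2) then 0 else if (v.1 <= 0) && (0 < v.2) then 1
  else if (v.1 < 0) && (v.2 <= 0) then 2 else 3.

Lemma quadrant_lt4 v : (quadrant v < 4)%N.
Proof. by rewrite /quadrant; case: ifP => //; case: ifP => //; case: ifP. Qed.

Lemma quadrantP v :
  [\/ quadrant v = 0%N /\ (0 < v.1 /\ 0 <= v.2), quadrant v = 1%N /\ (v.1 <= 0 /\ 0 < v.2),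
      quadrant v = 2%N /\ (v.1 < 0 /\ v.2 <= 0) | quadrant v = 3%N /\ (0 <= v.1 /\ v.2 <= 0)].
Proof.
rewrite /quadrant; case: ifP => [/andP[? ?]|not0]; first by constructor 1.
case: ifP => [/andP[? ?]|not1]; first by constructor 2.
case: ifP => [/andP[? ?]|not2]; first by constructor 3.
constructor 4; split => //.
have [x0|x0] := ltP v.1 0.
  have [y0|y0] := leP v.2 0; first by move: not2; rewrite x0 y0.
  by move: not1; rewrite y0 (ltW x0).
split=> //; have [y0|y0] := leP v.2 0 => //.
have [x1|x1] := ltP 0 v.1; first by move: not0; rewrite x1 (ltW y0).
by move: not1; rewrite x1 y0.
Qed.

Lemma dot_gt0_not_opposite v w : 0 < v.1 * w.1 + v.2 * w.2 ->
  ~~ opposite_quadrants (quadrant v) (quadrant w).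
Proof.
by move=> dot; case: (quadrantP v) => -[-> [? ?]]; case: (quadrantP w) => -[-> [? ?]] //=; nra.
Qed.

Lemma sqr_prod_norm_bounds v : `|v| ^+ 2 <= v.1 ^+ 2 + v.2 ^+ 2 <= 2 * `|v| ^+ 2.
Proof.
rewrite prod_normE -(real_normK (num_real v.1)) -(real_normK (num_real v.2)).
have := normr_ge0 v.1; have := normr_ge0 v.2.
by rewrite maxEle; case: (leP `|v.1| `|v.2|) => ? ? ?; apply/andP; split; nra.
Qed.

Lemma near_far_not_opposite m v w : 0 < m -> m <= `|v| -> m <= `|w| -> `|v - w| < m / 2 ->
  ~~ opposite_quadrants (quadrant v) (quadrant w).
Proof.
move=> m0 mv mw vw; apply: dot_gt0_not_opposite.
have /andP[v2 _] := sqr_prod_norm_bounds v; have /andP[w2 _] := sqr_prod_norm_bounds w.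
have /andP[_] := sqr_prod_norm_bounds (v - w); rewrite /= => vw2.
have mv2 : m ^+ 2 <= `|v| ^+ 2 by nra.
have mw2 : m ^+ 2 <= `|w| ^+ 2 by nra.
have vw4 : 4 * `|v - w| ^+ 2 <= m ^+ 2 by have := normr_ge0 (v - w); nra.
(* polarization, with the max norm within a factor [sqrt 2] of the Euclidean one *)
have : 2 * (v.1 * w.1 + v.2 * w.2) = (v.1 ^+ 2 + v.2 ^+ 2) + (w.1 ^+ 2 + w.2 ^+ 2)
   - ((v.1 - w.1) ^+ 2 + (v.2 - w.2) ^+ 2) by ring.
have : 0 < m ^+ 2 by rewrite exprn_gt0.
lra.
Qed.

Lemma quadrant_pos_axis v : 0 < v.1 -> v.2 = 0 -> quadrant v = 0%N.
Proof. by move=> x0 y0; rewrite /quadrant y0 lexx x0. Qed.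

Lemma quadrant_neg_axis v : v.1 < 0 -> v.2 = 0 -> quadrant v = 2%N.
Proof. by move=> x0 y0; rewrite /quadrant y0 ltxx lexx x0 !andbF /= andbT ltNge (ltW x0). Qed.

Lemma quadrant_neq3_left v : v.1 < 0 -> quadrant v != 3%N.
Proof. by move=> ?; case: (quadrantP v) => -[-> [? ?]] //; lra. Qed.

Lemma quadrant_neq3_up v : 0 < v.2 -> quadrant v != 3%N.
Proof. by move=> ?; case: (quadrantP v) => -[-> [? ?]] //; lra. Qed.

Lemma quadrant_neq1_right v : 0 < v.1 -> quadrant v != 1%N.
Proof. by move=> ?; case: (quadrantP v) => -[-> [? ?]] //; lra. Qed.

Lemma quadrant_neq1_lower v : v.2 <= 0 -> quadrant v != 1%N.
Proof. by move=> ?; case: (quadrantP v) => -[-> [? ?]] //; lra. Qed.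

Lemma quadrant_neq3_upper v : v != 0 -> 0 <= v.2 -> quadrant v != 3%N.
Proof.
move=> v0 y0; case: (quadrantP v) => -[E [x0 y0']]; rewrite E //.
have y : v.2 = 0 by lra.
have x : 0 < v.1.
  rewrite lt_neqAle x0 andbT; apply: contra v0 => /eqP x.
  by apply/eqP; case: v {E x0 y0 y0'} x y => a b /= <- ->.
by rewrite quadrant_pos_axis in E.
Qed.

End Quadrant.

Section Winding.
Variable R : realFieldType.
Implicit Types (f : nat -> R * R) (p : R * R).

(* [winding f p m n] counts the quarter turns made by [f i - p] along the polygon
   [f m, ..., f n]; it is four times the winding number of the polygon around [p]
   as soon as no two consecutive vertices lie in opposite quadrants as seen from [p]. *)
Definition winding f p (m n : nat) : int :=
  \sum_(m <= i < n) quarter_turn (quadrant (f i - p)) (quadrant (f i.+1 - p)).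

Lemma winding_split f p m k n : (m <= k <= n)%N ->
  winding f p m n = winding f p m k + winding f p k n.
Proof. by case/andP=> mk kn; rewrite /winding -big_cat_nat. Qed.

Lemma winding_off3 f p m n : (m <= n)%N ->
  (forall i, (m <= i <= n)%N -> quadrant (f i - p) != 3%N) ->
  (forall i, (m <= i < n)%N ->
     ~~ opposite_quadrants (quadrant (f i - p)) (quadrant (f i.+1 - p))) ->
  winding f p m n = (quadrant (f n - p))%:Z - (quadrant (f m - p))%:Z.
Proof.
move=> mn off3 nopp; rewrite /winding.
rewrite -(telescope_sumr (fun i => (quadrant (f i - p))%:Z) mn).
apply: eq_big_nat => i /andP[mi lt_in]; rewrite quarter_turn_off3 ?quadrant_lt4 ?nopp ?mi //.
  by rewrite off3 // mi ltnW.
by rewrite off3 // (leq_trans mi) // ltnW.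
Qed.

Lemma winding_off1 f p m n : (m <= n)%N ->
  (forall i, (m <= i <= n)%N -> quadrant (f i - p) != 1%N) ->
  (forall i, (m <= i < n)%N ->
     ~~ opposite_quadrants (quadrant (f i - p)) (quadrant (f i.+1 - p))) ->
  winding f p m n = angle_off1 (quadrant (f n - p)) - angle_off1 (quadrant (f m - p)).
Proof.
move=> mn off1 nopp; rewrite /winding.
rewrite -(telescope_sumr (fun i => angle_off1 (quadrant (f i - p))) mn).
apply: eq_big_nat => i /andP[mi lt_in]; rewrite quarter_turn_off1 ?quadrant_lt4 ?nopp ?mi //.
  by rewrite off1 // mi ltnW.
by rewrite off1 // (leq_trans mi) // ltnW.
Qed.

Lemma norm_sub_sub_lt (V : normedZmodType R) (a b c d : V) e :
  `|a - b| < e -> `|c - d| < e -> `|(a - c) - (b - d)| < e + e.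
Proof.
move=> ab cd; have -> : (a - c) - (b - d) = (a - b) - (c - d).
  by rewrite !opprB addrACA [RHS]addrACA [- c - b]addrC.
by apply: le_lt_trans (ler_normB _ _) _; apply: ltrD.
Qed.

(* Moving [p] by less than [m / 4] does not change the winding number of a closed
   polygon with short edges whose vertices stay at distance at least [m] from [p]:
   each edge and its two displaced copies form a cell whose quarter turns cancel. *)
Lemma winding_perturb f p p' m n : 0 < m -> f n = f 0%N ->
  (forall i, (i <= n)%N -> m <= `|f i - p| /\ m <= `|f i - p'|) ->
  (forall i, (i < n)%N -> `|f i - f i.+1| < m / 4) -> `|p - p'| < m / 4 ->
  winding f p 0 n = winding f p' 0 n.
Proof.
move=> m0 fn far step pp'.
pose A i := quadrant (f i - p); pose B i := quadrant (f i - p').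
pose g i := quarter_turn (A i) (B i).
have shift (a b c d : R * R) :
    `|a - b| < m / 4 -> `|c - d| < m / 4 -> `|(a - c) - (b - d)| < m / 2.
  by move=> ab cd; have := norm_sub_sub_lt ab cd; have -> : m / 4 + m / 4 = m / 2 by lra.
have q0 (q : R * R) : `|q - q| < m / 4 by rewrite subrr normr0 divr_gt0.
have p'p : `|p' - p| < m / 4 by rewrite distrC.
have cell i : (i < n)%N ->
    quarter_turn (A i) (A i.+1) - quarter_turn (B i) (B i.+1) = - (g i.+1 - g i).
  move=> lt_in; have [fa fb] := far i (ltnW lt_in); have [fa' fb'] := far i.+1 lt_in.
  have si := step i lt_in; have si' : `|f i.+1 - f i| < m / 4 by rewrite distrC.
  have := @quarter_turn_cycle4 (A i) (A i.+1) (B i.+1) (B i)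
    (quadrant_lt4 _) (quadrant_lt4 _) (quadrant_lt4 _) (quadrant_lt4 _)
    (near_far_not_opposite m0 fa fa' (shift _ _ _ _ si (q0 p)))
    (near_far_not_opposite m0 fa' fb' (shift _ _ _ _ (q0 _) pp'))
    (near_far_not_opposite m0 fb' fb (shift _ _ _ _ si' (q0 p')))
    (near_far_not_opposite m0 fb fa (shift _ _ _ _ (q0 _) p'p))
    (near_far_not_opposite m0 fa fb' (shift _ _ _ _ si pp'))
    (near_far_not_opposite m0 fa' fb (shift _ _ _ _ si' pp')).
  rewrite (@quarter_turnC (B i)) ?(@quarter_turnC (A i) (B i)) ?quadrant_lt4 // /g.
  move=> E; lia.
apply/eqP; rewrite -subr_eq0 /winding -sumrB.
rewrite (eq_big_nat _ _ (F2 := fun i => - (g i.+1 - g i))); last first.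
  by move=> i /andP[_]; exact: cell.
by rewrite sumrN telescope_sumr // /g /A /B fn subrr oppr0.
Qed.

End Winding.

Definition unit_interval {R : numDomainType} : set R := [set t : R | 0 <= t <= 1].

Section Topology.
Variable R : realType.
Local Notation I := (@unit_interval R).

Lemma unit_interval_compact : compact I.
Proof. by rewrite /unit_interval -(set_itvcc 0 1); exact: segment_compact. Qed.

Lemma unit_interval_connected : connected I.
Proof. by rewrite /unit_interval -(set_itvcc 0 1); exact: segment_connected. Qed.

Lemma unit_interval_mulr s t : I s -> I t -> I (s * t).
Proof. by rewrite /unit_interval /= => /andP[? ?] /andP[? ?]; apply/andP; split; nra. Qed.

Lemma unit_interval_ratio (j N : nat) : (j <= N)%N -> I (j%:R / N%:R).
Proof.
case: (posnP N) => [-> | N0 jN]; first by rewrite invr0 mulr0 /unit_interval /= lexx ler01.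
by apply/andP; split; [rewrite divr_ge0 | rewrite ler_pdivrMr ?ltr0n // mul1r ler_nat].
Qed.

Lemma unit_interval_uniform_continuity (V : normedModType R) (g : R -> V) :
  {within I, continuous g} -> forall e, 0 < e ->
  \forall N \near \oo, forall s t, I s -> I t -> `|s - t| <= N%:R^-1 -> `|g s - g t| < e.
Proof.
move=> gc e e0.
pose P (n : nat) (x : R) := forall t, I t -> `|x - t| <= n%:R^-1 -> `|g x - g t| < e.
have /compact_near_coveringP/near_covering_withinP cover := unit_interval_compact.
suff : \forall n \near \oo, I `<=` P n.
  by apply: filterS => n IP s t Is It st; exact: IP s Is t It st.
apply: (cover nat \oo P) => x Ix.
have e2 : 0 < e / 2 by rewrite divr_gt0.
have [d /= d0 gd] : exists2 d, 0 < d & forall y, I y -> `|x - y| < d -> `|g x - g y| < e / 2.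
  have /nbhs_ballP[d /= d0 gd] :=
    (subspace_continuousP _ _).1 gc x Ix (ball (g x) (e / 2)) (nbhsx_ballx _ _ e2).
  by exists d => // y Iy xy; have := gd y; rewrite -!ball_normE; apply.
exists (ball x (d / 2), [set n : nat | (d / 2)^-1 < n%:R]).
  by split => /=; [apply: nbhsx_ballx; rewrite divr_gt0 | exact: nbhs_infty_gtr].
move=> [x' n] [/= + n_large] Ix' t It x't; rewrite -ball_normE /= => xx'.
have n0 : 0 < n%:R :> R by apply: lt_trans n_large; rewrite invr_gt0 divr_gt0.
have n_small : n%:R^-1 < d / 2 by rewrite invf_plt ?posrE ?divr_gt0.
have gx' : `|g x - g x'| < e / 2 by apply: gd => //; lra.
have gt : `|g x - g t| < e / 2.
  by apply: gd => //; apply: le_lt_trans (ler_distD x' x t) _; lra.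
by apply: le_lt_trans (ler_distD (g x) (g x') (g t)) _; rewrite distrC; lra.
Qed.

Lemma far_from_closed (V : normedModType R) (K : set V) p : closed K -> ~ K p ->
  exists2 m, 0 < m & forall q, K q -> m <= `|q - p|.
Proof.
move=> cK Kp; have := closed_openC cK; rewrite openE => /(_ p Kp) /nbhs_ballP[m /= m0 mK].
exists m => // q Kq; rewrite leNgt distrC; apply/negP => pq.
by apply: (mK q) => //; rewrite -ball_normE.
Qed.

Lemma connected_locally_constant (T : topologicalType) (A : set T) (G : T -> Prop) :
  connected A -> (forall p, A p -> \forall q \near p, G q <-> G p) ->
  forall a b, A a -> A b -> G a -> G b.
Proof.
move=> cA loc a b Aa Ab Ga.
suff AG : A `&` G = A by move: Ab; rewrite -AG => -[].
apply: cA; first by exists a.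
- exists [set p | \forall q \near p, A q -> G q]; first exact: open_interior.
  apply/seteqP; split => p [Ap Gp]; split => //.
    by apply: filterS (loc p Ap) => q qp _; apply/qp.
  exact: nbhs_singleton Gp Ap.
- exists (~` [set p | \forall q \near p, A q -> ~ G q]).
    exact/open_closedC/open_interior.
  apply/seteqP; split => p [Ap Gp]; split => //.
    by move=> /nbhs_singleton /(_ Ap).
  apply: contrapT => nGp; apply: Gp.
  by apply: filterS (loc p Ap) => q qp _ /qp.
Qed.

End Topology.

Definition mirror {R : numDomainType} (p : R * R) : R * R := (p.1, - p.2).

Section Strings.
Variable R : realType.
Local Notation pt := (R * R)%type.
Local Notation I := (@unit_interval R).
Implicit Types (p q : pt) (g : R -> pt).

Lemma mirrorK : involutive (@mirror R).
Proof. by case=> a b; rewrite /mirror /= opprK. Qed.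

Lemma mirror_id p : p.2 = 0 -> mirror p = p.
Proof. by case: p => a b /= ->; rewrite /mirror oppr0. Qed.

Lemma mirror_dist p q : `|mirror p - mirror q| = `|p - q|.
Proof. by rewrite !prod_normE /= -opprD normrN. Qed.

Lemma mirror_continuous : continuous (@mirror R).
Proof.
move=> p; apply/cvgrPdist_lt => e e0.
by apply: filterS (nbhsx_ballx p e e0) => q; rewrite -ball_normE /= mirror_dist.
Qed.

Lemma string_compact g : {within I, continuous g} -> compact (string_of g).
Proof. by move=> gc; exact: continuous_compact gc (@unit_interval_compact R). Qed.

Lemma base_in_string g : string_of g (g 0).
Proof. by exists 0; rewrite // /unit_interval /= lexx ler01. Qed.

Definition sample g (t : R) (N j : nat) : pt := g (t * (j%:R / N%:R)).

Lemma sample0 g t N : sample g t N 0 = g 0.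
Proof. by rewrite /sample mul0r mulr0. Qed.

Lemma sampleN g t N : (0 < N)%N -> sample g t N N = g t.
Proof. by move=> N0; rewrite /sample divff ?mulr1 // pnatr_eq0 -lt0n. Qed.

Lemma sample_in_string g t N j : I t -> (j <= N)%N -> string_of g (sample g t N j).
Proof.
by move=> It jN; exists (t * (j%:R / N%:R)) => //; exact/unit_interval_mulr/unit_interval_ratio.
Qed.

Lemma sample_step g t : {within I, continuous g} -> I t -> forall e, 0 < e ->
  \forall N \near \oo, forall j, (j < N)%N -> `|sample g t N j - sample g t N j.+1| < e.
Proof.
move=> gc It e e0; apply: filterS (unit_interval_uniform_continuity gc e0) => N close j jN.
apply: close; [exact/unit_interval_mulr/unit_interval_ratio/ltnW
              | exact/unit_interval_mulr/unit_interval_ratio | rewrite -mulrBr].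
have -> : j%:R / N%:R - j.+1%:R / N%:R = - N%:R^-1 :> R.
  by rewrite -addn1 natrD mulrDl mul1r opprD addrA subrr add0r.
case/andP: It => t0 t1.
by rewrite normrM normrN !ger0_norm ?invr_ge0 // ler_piMl ?invr_ge0.
Qed.

End Strings.

Section Loop.
Variable R : realType.
Local Notation pt := (R * R)%type.
Local Notation I := (@unit_interval R).
Variables (u r : R -> pt) (tu tr : R).
Hypotheses (u_cont : {within I, continuous u}) (r_cont : {within I, continuous r}).
Hypotheses (u0 : (u 0).2 = 0) (r0 : (r 0).2 = 0).
Hypotheses (Itu : I tu) (Itr : I tr) (crossing : u tu = r tr).

Definition loop (N i : nat) : pt :=
  if (i <= N)%N then sample u tu N i
  else if (i <= 2 * N)%N then sample r tr N (2 * N - i)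
  else if (i <= 3 * N)%N then mirror (sample r tr N (i - 2 * N))
  else mirror (sample u tu N (4 * N - i)).

Lemma loopE_u N i : (i <= N)%N -> loop N i = sample u tu N i.
Proof. by rewrite /loop => ->. Qed.

Lemma loopE_r N i : (0 < N)%N -> (N <= i <= 2 * N)%N -> loop N i = sample r tr N (2 * N - i).
Proof.
move=> N0 /andP[Ni i2N]; rewrite /loop i2N.
case: leqP => [iN|//]; have -> : i = N by apply/eqP; rewrite eqn_leq iN.
by rewrite mul2n -addnn addnK !sampleN // crossing.
Qed.

Lemma loopE_mirror_r N i : (0 < N)%N -> (2 * N <= i <= 3 * N)%N ->
  loop N i = mirror (sample r tr N (i - 2 * N)).
Proof.
move=> N0 /andP[i2N i3N]; rewrite /loop i3N.
have -> : (i <= N)%N = false by lia.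
case: leqP => [i2N'|//]; have -> : i = (2 * N)%N by apply/eqP; rewrite eqn_leq i2N i2N'.
by rewrite subnn sample0 mirror_id.
Qed.

Lemma loopE_mirror_u N i : (0 < N)%N -> (3 * N <= i)%N ->
  loop N i = mirror (sample u tu N (4 * N - i)).
Proof.
move=> N0 i3N; rewrite /loop.
have -> : (i <= N)%N = false by lia.
have -> : (i <= 2 * N)%N = false by lia.
case: leqP => [i3N'|//]; have -> : i = (3 * N)%N by apply/eqP; rewrite eqn_leq i3N i3N'.
have -> : (4 * N - 3 * N = N)%N by lia.
have -> : (3 * N - 2 * N = N)%N by lia.
by rewrite !sampleN // crossing.
Qed.

Lemma loop0 N : loop N 0 = u 0.
Proof. by rewrite loopE_u // sample0. Qed.

Lemma loop_half N : (0 < N)%N -> loop N (2 * N) = r 0.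
Proof. by move=> N0; rewrite loopE_r ?leqnn ?andbT ?leq_pmull // subnn sample0. Qed.

Lemma loop_end N : (0 < N)%N -> loop N (4 * N) = u 0.
Proof. by move=> N0; rewrite loopE_mirror_u ?leq_pmul2r // subnn sample0 mirror_id. Qed.

Definition crossing_strings : set pt := string_of u `|` string_of r.

Definition loop_curve : set pt := crossing_strings `|` mirror @` crossing_strings.

Lemma loop_upper N i : (0 < N)%N -> (i <= 2 * N)%N -> crossing_strings (loop N i).
Proof.
move=> N0 i2N; have [iN|Ni] := leqP i N.
  by left; rewrite loopE_u //; exact: sample_in_string.
by right; rewrite loopE_r ?i2N ?(ltnW Ni) //; apply: sample_in_string => //; lia.
Qed.

Lemma loop_lower N i : (0 < N)%N -> (2 * N <= i <= 4 * N)%N ->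
  crossing_strings (mirror (loop N i)).
Proof.
move=> N0 /andP[i2N i4N]; have [i3N|Ni] := leqP i (3 * N).
  by right; rewrite loopE_mirror_r ?i2N ?i3N // mirrorK; apply: sample_in_string => //; lia.
by left; rewrite loopE_mirror_u ?(ltnW Ni) // mirrorK; apply: sample_in_string => //; lia.
Qed.

Lemma loop_in_curve N i : (0 < N)%N -> (i <= 4 * N)%N -> loop_curve (loop N i).
Proof.
move=> N0 i4N; have [i2N|Ni] := leqP i (2 * N); first by left; exact: loop_upper.
by right; exists (mirror (loop N i)); [apply: loop_lower; rewrite ?(ltnW Ni) | rewrite mirrorK].
Qed.

Lemma loop_curve_compact : compact loop_curve.
Proof.
have strings_compact : compact crossing_strings.
  by apply: compactU; exact: string_compact.
apply: (compactU strings_compact); apply: (continuous_compact _ strings_compact).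
exact/continuous_subspaceT/mirror_continuous.
Qed.

Lemma loop_step e : 0 < e ->
  \forall N \near \oo, forall i, (i < 4 * N)%N -> `|loop N i - loop N i.+1| < e.
Proof.
move=> e0; near=> N => i i4N.
have N0 : (0 < N)%N by near: N; exact: nbhs_infty_gt.
have u_step := near (sample_step u_cont Itu e0) N.
have r_step := near (sample_step r_cont Itr e0) N.
have [iN|Ni] := ltnP i N; first by rewrite !loopE_u // ?u_step // ltnW.
have [i2N|Ni2] := ltnP i (2 * N).
  rewrite !loopE_r ?Ni ?(leqW Ni) ?(ltnW i2N) //.
  have -> : (2 * N - i = (2 * N - i.+1).+1)%N by lia.
  by rewrite distrC r_step //; lia.
have [i3N|Ni3] := ltnP i (3 * N).
  rewrite !loopE_mirror_r ?Ni2 ?(leqW Ni2) ?(ltnW i3N) // mirror_dist.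
  have -> : (i.+1 - 2 * N = (i - 2 * N).+1)%N by lia.
  by rewrite r_step //; lia.
rewrite !loopE_mirror_u ?(leqW Ni3) // mirror_dist.
have -> : (4 * N - i = (4 * N - i.+1).+1)%N by lia.
by rewrite distrC u_step //; lia.
Unshelve. all: by end_near.
Qed.

Lemma loop_curve_far p : ~ loop_curve p ->
  exists2 m, 0 < m & forall q, loop_curve q -> m <= `|q - p|.
Proof.
exact: far_from_closed (compact_closed (@norm_hausdorff _ _) loop_curve_compact).
Qed.

Lemma loop_curve_bounded : exists M, forall p, loop_curve p -> `|p| <= M.
Proof.
have [M0 [_ M0_bound]] := compact_bounded loop_curve_compact.
by exists (M0 + 1) => p; apply: M0_bound; rewrite ltrDl.
Qed.

Lemma loop_far_nonopposite p : ~ loop_curve p -> exists2 m, 0 < m & \forall N \near \oo,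
  (forall i, (i <= 4 * N)%N -> m <= `|loop N i - p|) /\
  (forall i, (i < 4 * N)%N ->
     ~~ opposite_quadrants (quadrant (loop N i - p)) (quadrant (loop N i.+1 - p))).
Proof.
move=> /loop_curve_far[m m0 far]; have m2 : 0 < m / 2 by rewrite divr_gt0.
exists m => //; near=> N.
have N0 : (0 < N)%N by near: N; exact: nbhs_infty_gt.
have far_i i : (i <= 4 * N)%N -> m <= `|loop N i - p| by move=> i4N; exact/far/loop_in_curve.
split=> // i i4N; apply: (near_far_not_opposite m0 (far_i _ (ltnW i4N)) (far_i _ i4N)).
by rewrite opprB addrA subrK; apply: (near (loop_step m2) N).
Unshelve. all: by end_near.
Qed.

Hypotheses (u_up : forall t, I t -> 0 <= (u t).2) (r_up : forall t, I t -> 0 <= (r t).2).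

Lemma crossing_strings_upper p : crossing_strings p -> 0 <= p.2.
Proof. by case=> -[t It <-]; [exact: u_up | exact: r_up]. Qed.

Lemma upper_loop_curve p : 0 <= p.2 -> loop_curve p -> crossing_strings p.
Proof.
move=> p0 [//|[q sq qp]]; move: p0; rewrite -qp /= => q0.
by rewrite mirror_id //; have := crossing_strings_upper sq; lra.
Qed.

Variable x : R -> pt.
Hypotheses (x_cont : {within I, continuous x}) (x0 : (x 0).2 = 0).
Hypotheses (x_up : forall t, I t -> 0 <= (x t).2).
Hypothesis x_off : forall p, string_of x p -> ~ crossing_strings p.
Hypotheses (ux : (u 0).1 < (x 0).1) (xr : (x 0).1 < (r 0).1).

(* [loop] runs clockwise, hence [-4] quarter turns, around the points it encloses. *)
Definition encircles p := \forall N \near \oo, winding (loop N) p 0 (4 * N) = -4.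

Lemma encircles_locally_constant p : ~ loop_curve p ->
  \forall q \near p, encircles q <-> encircles p.
Proof.
move=> /loop_curve_far[m m0 far].
have m2 : 0 < m / 2 by rewrite divr_gt0.
have m8 : 0 < m / 2 / 4 by rewrite divr_gt0.
apply: filterS (nbhsx_ballx p _ m8) => q; rewrite -ball_normE /= => pq.
have same : \forall N \near \oo, winding (loop N) p 0 (4 * N) = winding (loop N) q 0 (4 * N).
  near=> N.
  have N0 : (0 < N)%N by near: N; exact: nbhs_infty_gt.
  apply: (winding_perturb m2); first by rewrite loop_end // loop0.
  - move=> i i4N; have := far _ (loop_in_curve N0 i4N).
    have := ler_distD q (loop N i) p; have := distrC p q; lra.
  - exact: (near (loop_step m8) N).
  - exact: pq.
by split; apply: filterS2 same => N; [move=> <- | move=> ->].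
Unshelve. all: by end_near.
Qed.

Lemma string_x_off_loop p : string_of x p -> ~ loop_curve p.
Proof.
move=> xp lp; apply: (x_off xp); apply: upper_loop_curve lp.
by case: xp => t It <-; exact: x_up.
Qed.

Lemma encircles_x0 : encircles (x 0).
Proof.
have [m m0 far_nopp] := loop_far_nonopposite (string_x_off_loop (base_in_string x)).
rewrite /encircles; apply: filterS2 far_nopp (nbhs_infty_gt 0) => N [far nopp] N0.
have N2 : (0 <= 2 * N <= 4 * N)%N by rewrite leq_pmul2r.
rewrite (winding_split _ _ N2).
rewrite (@winding_off3 _ _ _ 0 (2 * N)) //; first last.
- by move=> i /andP[_ i2N]; apply: nopp; lia.
- move=> i /andP[_ i2N]; apply: quadrant_neq3_upper.
    by rewrite -normr_gt0; apply: lt_le_trans m0 (far _ _); lia.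
  by rewrite /= x0 subr0; exact/crossing_strings_upper/loop_upper.
rewrite (@winding_off1 _ _ _ (2 * N) (4 * N)) //; first last.
- by move=> i /andP[_ i4N]; exact: nopp.
- move=> i i24N; apply: quadrant_neq1_lower; rewrite /= x0 subr0.
  by have := crossing_strings_upper (loop_lower N0 i24N); rewrite /=; lra.
rewrite loop_half // loop_end // loop0.
rewrite (@quadrant_pos_axis _ (r 0 - x 0)) /= ?subr_gt0 ?r0 ?x0 ?subrr //.
by rewrite (@quadrant_neg_axis _ (u 0 - x 0)) /= ?subr_lt0 ?u0 ?x0 ?subrr.
Qed.

Lemma not_encircles_far M q : (forall p, loop_curve p -> `|p| <= M) -> M < `|q| ->
  ~ encircles q.
Proof.
move=> bound Mq enc.
have q_off : ~ loop_curve q by move=> /bound; rewrite leNgt Mq.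
have [m m0 far_nopp] := loop_far_nonopposite q_off.
have [N [[_ nopp] [N0 W]]] := filter_ex (filterI far_nopp (filterI (nbhs_infty_gt 0) enc)).
have {}nopp i : (0 <= i < 4 * N)%N ->
    ~~ opposite_quadrants (quadrant (loop N i - q)) (quadrant (loop N i.+1 - q)).
  by case/andP=> _; exact: nopp.
have loop_small i : (0 <= i <= 4 * N)%N -> `|(loop N i).1| <= M /\ `|(loop N i).2| <= M.
  case/andP=> _ i4N; have := bound _ (loop_in_curve N0 i4N).
  by rewrite prod_normE ge_max => /andP.
(* seen from [q], the loop stays in an open half-plane *)
have [off3|off1] : (forall i, (0 <= i <= 4 * N)%N -> quadrant (loop N i - q) != 3%N) \/
                   (forall i, (0 <= i <= 4 * N)%N -> quadrant (loop N i - q) != 1%N).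
- move: Mq; rewrite prod_normE lt_max !ltr_normr => /orP[]/orP[] Mq;
    [left | right | right | left] => i /loop_small; rewrite !ler_norml => -[/andP[? ?] /andP[? ?]];
    [apply: quadrant_neq3_left | apply: quadrant_neq1_right
    | apply: quadrant_neq1_lower | apply: quadrant_neq3_up] => /=; lra.
- by move: W; rewrite winding_off3 // loop_end // loop0 subrr.
- by move: W; rewrite winding_off1 // loop_end // loop0 subrr.
Qed.

Lemma string_x_encircled p : string_of x p -> encircles p.
Proof.
have x_connected : connected (string_of x).
  exact: connected_continuous_connected (@unit_interval_connected R) x_cont.
move=> xp; apply: (connected_locally_constant x_connected _ (base_in_string x) xp encircles_x0).
by move=> q /string_x_off_loop; exact: encircles_locally_constant.
Qed.

Lemma unbounded_closure_misses_x (C : set pt) : connected C ->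
  C `<=` @upper_half R `\` crossing_strings -> ~ bounded_pts C ->
  string_of x `&` closure C = set0.
Proof.
move=> cC C_off unbounded; rewrite -subset0 => w [xw Cw].
have C_off_loop p : C p -> ~ loop_curve p by move=> /C_off[p0 ncs] /(upper_loop_curve p0).
have [p [Cp Ep]] := Cw _ (encircles_locally_constant (string_x_off_loop xw)).
have [M bound] := loop_curve_bounded.
have [q [Cq Mq]] : exists q, C q /\ M < `|q|.
  apply: contrapT => none; apply: unbounded; exists M => q Cq.
  have : `|q| <= M by rewrite leNgt; apply/negP => Mq; apply: none; exists q.
  by rewrite prod_normE ge_max => /andP[].
apply: (not_encircles_far bound Mq).
apply: (connected_locally_constant cC _ Cp Cq); last exact/Ep/string_x_encircled.
by move=> z /C_off_loop; exact: encircles_locally_constant.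
Qed.

End Loop.

Lemma crossing_strings_enclose (R : realType) (u r x : R -> R * R) :
  is_string u -> is_string r -> is_string x ->
  string_of u `&` string_of r !=set0 ->
  string_of x `&` (string_of u `|` string_of r) = set0 ->
  (u 0).1 < (x 0).1 -> (x 0).1 < (r 0).1 ->
  forall C : set (R * R), connected C -> C `<=` @upper_half R `\` (string_of u `|` string_of r) ->
  ~ bounded_pts C -> string_of x `&` closure C = set0.
Proof.
move=> [u_cont [u0 u_ax]] [r_cont [r0 r_ax]] [x_cont [x0 x_ax]].
move=> [_ [[tu Itu <-] [tr Itr /esym crossing]]] x_disj ux xr C.
have x_off p : string_of x p -> ~ crossing_strings u r p.
  by move=> xp urp; have : (string_of x `&` (string_of u `|` string_of r)) p by []; rewrite x_disj.
apply: (unbounded_closure_misses_x u_cont r_cont u0 r0 Itu Itr crossing _ _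
  x_cont x0 _ x_off ux xr).
- by move=> t /u_ax[].
- by move=> t /r_ax[].
- by move=> t /x_ax[].
Qed.

Theorem lemma4 (R : realType) (V : finType) (e : rel V) (phi : V -> R -> R * R) :
  (forall u v, e u v = e v u) -> irreflexive e ->
  outer_string_rep e phi ->
  forall x r : V,
    external phi x ->
    string_of (phi r) `&` string_of (phi x) = set0 ->
    (base phi x).1 < (base phi r).1 ->
  forall u : V, e r u -> (base phi u).1 < (base phi x).1 ->
    (u == x) || e x u.
Proof.
move=> _ e_irr [strings adj] x r [C [[p [_ C_def]] [unbounded [w [xw [Cw _]]]]]] rx xr u ru ux.
apply: contrapT => /negP/norP[xu_neq xu_nadj].
have ur_meet : string_of (phi u) `&` string_of (phi r) !=set0.
  by rewrite setIC; apply/(adj r u _).1 => //; apply: contraTneq ru => ->; rewrite e_irr.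
have x_disj : string_of (phi x) `&` (string_of (phi u) `|` string_of (phi r)) = set0.
  rewrite setIUr [_ `&` string_of (phi r)]setIC rx setU0.
  have xu_neq' : x != u by rewrite eq_sym.
  by apply/eqP/negPn/negP => /set0P/(adj x u xu_neq').2; apply/negP.
have C_off : C `<=` @upper_half R `\` (string_of (phi u) `|` string_of (phi r)).
  rewrite C_def => q /connected_component_sub[q_up q_off].
  by split => // -[uq|rq]; apply: q_off; [exists u | exists r].
have cC : connected C by rewrite C_def; exact: component_connected.
have := crossing_strings_enclose (strings u) (strings r) (strings x) ur_meet x_disj
  ux xr cC C_off unbounded.
by rewrite -subset0 => /(_ w (conj xw Cw)).
Qed.
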